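(* Let $\mathbb{K}$ be an algebraically closed field with $\operatorname{char}(\mathbb{K})\neq 2$. Let \[ A=\frac{\mathbb{K}\langle x_1,x_2,x_3,x_4\rangle}{\langle g_1,\ldots,g_6\rangle}, \] where \[ g_1=x_1x_2-x_2x_1,\quad g_2=x_2x_3-x_3x_2,\quad g_3=x_1x_3-x_3x_1,\quad g_4=x_1x_4-x_4x_1, \] \[ g_5=x_2x_4-x_4x_2,\quad g_6=x_3x_4-x_4x_3-x_1^2+x_2x_3. \] Then the point scheme of $A$ is $\mathcal{V}\big(x_1(x_1^2-x_2x_3),\,x_2(x_1^2-x_2x_3)\big)\subset\mathbb{P}^3$, which contains the double line $\mathcal{V}(x_1,x_2)$.
   Context: Point scheme: for a quadratic algebra $A=\mathbb{K}\langle x_1,\dots,x_4\rangle/\langle g_1,\dots,g_6\rangle$ with each $g_i=\sum_{j,k}c_{ijk}x_jx_k$ homogeneous of degree 2, let $D$ be the $6\times 4$ matrix with entries $D_{ik}=\sum_j c_{ijk}x_j$ (linear forms in $x_1,\dots,x_4$), so that $g_i(\alpha,\beta):=\sum_{j,k}c_{ijk}\alpha_j\beta_k=(D(\alpha)\beta)_i$ for $(\alpha,\beta)\in\mathbb{P}^3\times\mathbb{P}^3$. The point scheme of $A$ is the subscheme of $\mathbb{P}^3$ (homogeneous coordinates $x_1,\dots,x_4$) defined by the vanishing of all $4\times 4$ minors of $D$; its points are the $\alpha\in\mathbb{P}^3$ for which there exists $\beta\in\mathbb{P}^3$ with $g_i(\alpha,\beta)=0$ for all $i$. For homogeneous polynomials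 $f_1,\dots,f_r$, $\mathcal{V}(f_1,\dots,f_r)$ denotes their zero locus (subscheme) in $\mathbb{P}^3$. *)

From HB Require Import structures.
From mathcomp Require Import all_boot all_algebra.
From mathcomp Require Import mpoly.
Set Implicit Arguments.
Unset Strict Implicit.
Unset Printing Implicit Defensive.
Import GRing.Theory.
Local Open Scope ring_scope.

(* A quadratic noncommutative relation g = sum c * x_j x_k is encoded as a
   list of terms (c, j, k) (0-based indices: x_1 is index 0). *)
Definition qterm := (int * nat * nat)%type.

Definition quad_coef (K : nzRingType) (rels : seq (seq qterm)) (i j k : nat) : K :=
  \sum_(t <- nth [::] rels i | (t.1.2 == j) && (t.2 == k)) t.1.1%:~R.

Definition Dmat (K : fieldType) (m n : nat) (c : 'I_m -> 'I_n -> 'I_n -> K)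
  : 'M[{mpoly K[n]}]_(m, n) :=
  \matrix_(i, k) \sum_(j < n) (c i j k)%:MP * 'X_j.

(* All n x n minors of D (row selections f; non-injective ones give 0). *)
Definition minors_gens (K : fieldType) (m n : nat) (c : 'I_m -> 'I_n -> 'I_n -> K)
  : seq {mpoly K[n]} :=
  [seq \det (rowsub (fun r => f r) (Dmat c)) | f : {ffun 'I_n -> 'I_m}].

Definition in_ideal (R : comNzRingType) (gs : seq R) (p : R) : Prop :=
  exists cs : seq R, p = \sum_(i < size gs) cs`_i * gs`_i.

Definition in_saturation (K : fieldType) (n : nat) (gs : seq {mpoly K[n]})
  (p : {mpoly K[n]}) : Prop :=
  exists e : nat, forall mo : 'X_{1..n}, mdeg mo = e -> in_ideal gs ('X_[mo] * p).

(* Closed subschemes V(gs1), V(gs2) of P^{n-1} (gs homogeneous) coincide *)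
Definition same_subscheme (K : fieldType) (n : nat) (gs1 gs2 : seq {mpoly K[n]}) :=
  forall p, in_saturation gs1 p <-> in_saturation gs2 p.

(* V(gsZ) is a closed subscheme of V(gsW) *)
Definition subscheme_of (K : fieldType) (n : nat) (gsZ gsW : seq {mpoly K[n]}) :=
  forall p, in_saturation gsW p -> in_saturation gsZ p.

Definition point_scheme_gens (K : fieldType) (m n : nat) (rels : seq (seq qterm))
  : seq {mpoly K[n]} :=
  minors_gens (fun (i : 'I_m) (j k : 'I_n) => quad_coef K rels i j k).

Definition A_rels : seq (seq qterm) :=
  [:: [:: (1%Z, 0, 1); (-1%Z, 1, 0)];
      [:: (1%Z, 1, 2); (-1%Z, 2, 1)];
      [:: (1%Z, 0, 2); (-1%Z, 2, 0)];
      [:: (1%Z, 0, 3); (-1%Z, 3, 0)];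
      [:: (1%Z, 1, 3); (-1%Z, 3, 1)];
      [:: (1%Z, 2, 3); (-1%Z, 3, 2); (-1%Z, 0, 0); (1%Z, 1, 2)] ].

(* coordinate x_{i+1} of P^3 *)
Definition xv (K : fieldType) (i : nat) : {mpoly K[4]} := 'X_(inord i).

From HB Require Import structures.
From mathcomp Require Import all_boot all_algebra.
From mathcomp Require Import mpoly.
From mathcomp Require Import ring.
Import GRing.Theory.
Local Open Scope ring_scope.

(* The first five relations are commutators, so D(x) x = (0, ..., 0, -f)^T with
   f = x1^2 - x2 x3.  By Cramer's rule, det M * x_k = sum_r adj(M)_(k,r) (M x)_r for
   every 4 x 4 row selection M of D, so only cofactors deleting the g6-row survive;
   in the commutator rows the third and fourth columns of D lie in (x1, x2), hence
   x_k times any maximal minor lies in (x1 f, x2 f).  Conversely x_k x1 f and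
   x_k x2 f are explicit maximal minors up to sign, so the two ideals have the same
   saturation.  Both x1 f and x2 f lie in (x1, x2)^2, the double line. *)

Section IdealMembership.
Variable R : comNzRingType.
Implicit Types (gs : seq R) (p : R).

Lemma in_ideal0 gs : in_ideal gs 0.
Proof. by exists [::]; rewrite big1 // => i _; rewrite nth_nil mul0r. Qed.

Lemma in_idealD gs p q : in_ideal gs p -> in_ideal gs q -> in_ideal gs (p + q).
Proof.
move=> [cp ->] [cq ->]; exists (mkseq (fun i => cp`_i + cq`_i) (size gs)).
by rewrite -big_split; apply: eq_bigr => i _; rewrite nth_mkseq // mulrDl.
Qed.

Lemma in_idealMl gs c p : in_ideal gs p -> in_ideal gs (c * p).
Proof.
move=> [cp ->]; exists (mkseq (fun i => c * cp`_i) (size gs)).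
by rewrite mulr_sumr; apply: eq_bigr => i _; rewrite nth_mkseq // mulrA.
Qed.

Lemma in_ideal_sum gs (I : Type) (r : seq I) (P : pred I) (F : I -> R) :
  (forall i, P i -> in_ideal gs (F i)) -> in_ideal gs (\sum_(i <- r | P i) F i).
Proof. by move=> gsF; apply: big_ind => //; [exact: in_ideal0 | exact: in_idealD]. Qed.

Lemma in_ideal_mem gs g : g \in gs -> in_ideal gs g.
Proof.
move=> gs_g; have lt_g : (index g gs < size gs)%N by rewrite index_mem.
exists (mkseq (fun i => (i == index g gs)%:R) (size gs)).
rewrite (bigD1 (Ordinal lt_g)) //= nth_mkseq // eqxx mul1r nth_index //.
rewrite big1 ?addr0 // => i neq_i; rewrite nth_mkseq //.
by case: eqP => [eq_i | _]; [case/eqP: neq_i; apply: val_inj | rewrite mul0r].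
Qed.

Lemma in_ideal_trans gs gs' p :
  {in gs, forall g, in_ideal gs' g} -> in_ideal gs p -> in_ideal gs' p.
Proof.
move=> gs_gs' [cp ->]; apply: in_ideal_sum => i _.
by apply/in_idealMl/gs_gs'/mem_nth.
Qed.

Lemma in_idealMr gs c p :
  in_ideal gs p -> in_ideal [seq g * c | g <- gs] (p * c).
Proof.
move=> [cp ->]; exists cp; rewrite size_map mulr_suml.
by apply: eq_bigr => i _; rewrite (nth_map 0) // mulrA.
Qed.

Lemma in_ideal_det_col gs n (A : 'M[R]_n) j :
  (forall i, in_ideal gs (A i j)) -> in_ideal gs (\det A).
Proof.
move=> gsA; rewrite (expand_det_col _ j); apply: in_ideal_sum => i _.
by rewrite mulrC; apply: in_idealMl.
Qed.
End IdealMembership.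

Lemma mul_det_coord (R : comNzRingType) n (M : 'M[R]_n) (v : 'cV[R]_n) k :
  \det M * v k 0 = \sum_r \adj M k r * (M *m v) r 0.
Proof.
transitivity ((\adj M *m (M *m v)) k 0); last by rewrite mxE.
by rewrite mulmxA mul_adj_mx mul_scalar_mx mxE.
Qed.

Section Saturation.
Variables (K : fieldType) (n : nat).
Implicit Types (gs : seq {mpoly K[n]}) (p : {mpoly K[n]}).

Lemma in_saturation_trans gs gs' p :
  {in gs, forall g, in_ideal gs' g} -> in_saturation gs p -> in_saturation gs' p.
Proof. by move=> gs_gs' [e sat_p]; exists e => mo /sat_p; apply: in_ideal_trans. Qed.

Lemma in_saturation_shift gs gs' p :
  (forall k : 'I_n, {in gs, forall g, in_ideal gs' ('X_k * g)}) ->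
  in_saturation gs p -> in_saturation gs' p.
Proof.
move=> gs_gs' [e sat_p]; exists e.+1 => mo deg_mo.
have [k mo_k | mo0] := pickP (fun i => mo i != 0%N); last first.
  by move: deg_mo; rewrite mdegE big1 // => i _; apply/eqP/negbFE/mo0.
have le_k : (U_(k) <= mo)%MM by rewrite lep1mP.
have deg_mo' : mdeg (mo - U_(k))%MM = e.
  by move: deg_mo; rewrite -{1}(submK le_k) mdegD mdeg1 addn1 => -[].
rewrite -(submK le_k) mpolyXD -mulrA mulrCA.
case: (sat_p _ deg_mo') => cs ->; rewrite mulr_sumr; apply: in_ideal_sum => i _.
by rewrite mulrCA; apply/in_idealMl/gs_gs'/mem_nth.
Qed.
End Saturation.

Definition det4 {R : comNzRingType} (a : nat -> nat -> R) : R :=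
    a 0%N 0%N * a 1%N 1%N * a 2%N 2%N * a 3%N 3%N
  - a 0%N 0%N * a 1%N 1%N * a 2%N 3%N * a 3%N 2%N
  - a 0%N 0%N * a 1%N 2%N * a 2%N 1%N * a 3%N 3%N
  + a 0%N 0%N * a 1%N 2%N * a 2%N 3%N * a 3%N 1%N
  + a 0%N 0%N * a 1%N 3%N * a 2%N 1%N * a 3%N 2%N
  - a 0%N 0%N * a 1%N 3%N * a 2%N 2%N * a 3%N 1%N
  - a 0%N 1%N * a 1%N 0%N * a 2%N 2%N * a 3%N 3%N
  + a 0%N 1%N * a 1%N 0%N * a 2%N 3%N * a 3%N 2%N
  + a 0%N 1%N * a 1%N 2%N * a 2%N 0%N * a 3%N 3%N
  - a 0%N 1%N * a 1%N 2%N * a 2%N 3%N * a 3%N 0%N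
  - a 0%N 1%N * a 1%N 3%N * a 2%N 0%N * a 3%N 2%N
  + a 0%N 1%N * a 1%N 3%N * a 2%N 2%N * a 3%N 0%N
  + a 0%N 2%N * a 1%N 0%N * a 2%N 1%N * a 3%N 3%N
  - a 0%N 2%N * a 1%N 0%N * a 2%N 3%N * a 3%N 1%N
  - a 0%N 2%N * a 1%N 1%N * a 2%N 0%N * a 3%N 3%N
  + a 0%N 2%N * a 1%N 1%N * a 2%N 3%N * a 3%N 0%N
  + a 0%N 2%N * a 1%N 3%N * a 2%N 0%N * a 3%N 1%N
  - a 0%N 2%N * a 1%N 3%N * a 2%N 1%N * a 3%N 0%N
  - a 0%N 3%N * a 1%N 0%N * a 2%N 1%N * a 3%N 2%N
  + a 0%N 3%N * a 1%N 0%N * a 2%N 2%N * a 3%N 1%N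
  + a 0%N 3%N * a 1%N 1%N * a 2%N 0%N * a 3%N 2%N
  - a 0%N 3%N * a 1%N 1%N * a 2%N 2%N * a 3%N 0%N
  - a 0%N 3%N * a 1%N 2%N * a 2%N 0%N * a 3%N 1%N
  + a 0%N 3%N * a 1%N 2%N * a 2%N 1%N * a 3%N 0%N.

Lemma expand_det_row0 (R : comNzRingType) n (A : 'M[R]_n.+1) :
  \det A = \sum_(j < n.+1) A 0 j * ((-1) ^+ j * \det (row' 0 (col' j A))).
Proof. by rewrite (expand_det_row _ 0); apply: eq_bigr => j _; rewrite /cofactor add0n. Qed.

Lemma det_mx44 (R : comNzRingType) (a : nat -> nat -> R) :
  \det (\matrix_(i < 4, j < 4) a i j) = det4 a.
Proof.
rewrite !(expand_det_row0, big_ord_recl, big_ord0) !det_mx00 !mxE /= /bump /= /det4.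
ring.
Qed.

Section PointSchemeOfA.
Variable K : fieldType.
Local Notation R := {mpoly K[4]}.
Local Notation x := (@xv K).
Local Notation f := (x 0%N ^+ 2 - x 1%N * x 2%N).
Local Notation minorsA := (@point_scheme_gens K 6 4 A_rels).

Definition DA_entry (i k : nat) : R :=
  match i, k with
  | 0, 0 => - x 1%N | 0, 1 => x 0%N
  | 1, 1 => - x 2%N | 1, 2 => x 1%N
  | 2, 0 => - x 2%N | 2, 2 => x 0%N
  | 3, 0 => - x 3%N | 3, 3 => x 0%N
  | 4, 1 => - x 3%N | 4, 3 => x 1%N
  | 5, 0 => - x 0%N | 5, 2 => x 1%N - x 3%N | 5, 3 => x 2%N
  | _, _ => 0
  end.

Definition DA : 'M[R]_(6, 4) := \matrix_(i, k) DA_entry i k.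

Lemma xvE (j : 'I_4) : 'X_j = x j.
Proof. by rewrite /xv inord_val. Qed.

Lemma Dmat_A : Dmat (fun (i : 'I_6) (j k : 'I_4) => quad_coef K A_rels i j k) = DA.
Proof.
apply/matrixP => i k; rewrite !mxE !big_ord_recl big_ord0 !xvE /=.
case: i => [[|[|[|[|[|[|i]]]]]] lt_i] //; case: k => [[|[|[|[|k]]]] lt_k] //=;
  rewrite /quad_coef /= ?big_cons ?big_nil /= ?mpolyC0 ?mul0r ?add0r ?addr0 //=;
  by rewrite ?mpolyCN ?mpolyC1 ?mulN1r ?mul1r ?addr0 ?add0r.
Qed.

Lemma minor_in_point_ideal (s : seq nat) c p : all (fun i => i < 6)%N s ->
  p = c * det4 (fun i k => DA_entry (nth 0%N s i) k) -> in_ideal minorsA p.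
Proof.
move=> lt_s ->; apply: in_idealMl; rewrite -det_mx44.
pose F := [ffun i : 'I_4 => inord (nth 0%N s i) : 'I_6].
have -> : \matrix_(i < 4, k < 4) DA_entry (nth 0%N s i) k = rowsub F DA.
  apply/matrixP => i k; rewrite !mxE ffunE inordK //.
  by have [/(all_nthP 0%N lt_s) | /(nth_default 0%N) ->] := ltnP i (size s).
apply: in_ideal_mem; rewrite /point_scheme_gens /minors_gens Dmat_A.
exact: (image_f (fun F : {ffun 'I_4 -> 'I_6} => \det (rowsub F DA))).
Qed.

Definition xcol : 'cV[R]_4 := \col_j x j.

Lemma DA_mul_xcol (i : 'I_6) : (DA *m xcol) i 0 = if val i == 5%N then - f else 0.
Proof.
rewrite !mxE !big_ord_recl big_ord0 !mxE /= /bump /=.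
by case: i => [[|[|[|[|[|[|i]]]]]] lt_i] //=; ring.
Qed.

Lemma DA_last_cols_in_line (i : 'I_6) (k : 'I_4) : val i != 5%N -> (2 <= k)%N ->
  in_ideal [:: x 0%N; x 1%N] (DA i k).
Proof.
rewrite mxE; case: i => [[|[|[|[|[|[|i]]]]]] lt_i] //=;
  case: k => [[|[|[|[|k]]]] lt_k] //= _ _;
  by [exact: in_ideal0 | apply: in_ideal_mem; rewrite !inE eqxx ?orbT].
Qed.

Lemma cofactor_g6_in_line (F : {ffun 'I_4 -> 'I_6}) (r k : 'I_4) :
  injective F -> val (F r) = 5%N ->
  in_ideal [:: x 0%N; x 1%N] (\det (row' r (col' k (rowsub F DA)))).
Proof.
move=> injF F_r; pose j := Ordinal (isT : 2 < 3)%N.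
apply: (@in_ideal_det_col _ _ _ _ j) => i.
have -> : row' r (col' k (rowsub F DA)) i j = DA (F (lift r i)) (lift k j) by rewrite !mxE.
apply: DA_last_cols_in_line; last by rewrite /= /bump; case: (k <= 2)%N.
apply: contra (neq_lift r i) => /eqP F_ri.
by apply/eqP/injF/val_inj; rewrite F_ri F_r.
Qed.

Lemma mulX_minor_in_ideal (F : {ffun 'I_4 -> 'I_6}) (k : 'I_4) :
  in_ideal [:: x 0%N * f; x 1%N * f] ('X_k * \det (rowsub F DA)).
Proof.
have [/injectiveP injF | /injectivePn [r1 [r2 neq_r F_r]]] := boolP (injectiveb F); last first.
  rewrite (determinant_alternate neq_r) ?mulr0; first exact: in_ideal0.
  by move=> j; rewrite !mxE F_r.
have -> : 'X_k = xcol k 0 by rewrite mxE xvE.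
rewrite [_ * \det _]mulrC mul_det_coord; apply: in_ideal_sum => r _.
have -> : (rowsub F DA *m xcol) r 0 = (DA *m xcol) (F r) 0.
  by rewrite mul_rowsub_mx [LHS]mxE.
rewrite DA_mul_xcol; case: eqP => [F_r | _]; last by rewrite mulr0; exact: in_ideal0.
rewrite mxE /cofactor mulrN -mulrA -mulNr; apply: in_idealMl.
exact: in_idealMr (cofactor_g6_in_line F r k injF F_r).
Qed.

Lemma mulX_point_gen_in_ideal (k : 'I_4) :
  {in minorsA, forall g, in_ideal [:: x 0%N * f; x 1%N * f] ('X_k * g)}.
Proof.
move=> g; rewrite /point_scheme_gens /minors_gens Dmat_A => /imageP [F _ ->].
exact: mulX_minor_in_ideal.
Qed.

Lemma mulX_gen_in_point_ideal (k : 'I_4) :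
  {in [:: x 0%N * f; x 1%N * f], forall g, in_ideal minorsA ('X_k * g)}.
Proof.
move=> g; rewrite !inE xvE => /orP [] /eqP ->; case: k => [[|[|[|[|k]]]] lt_k] //=.
- by apply: (@minor_in_point_ideal [:: 0; 2; 3; 5]%N 1); rewrite // /det4 /=; ring.
- by apply: (@minor_in_point_ideal [:: 0; 1; 3; 5]%N 1); rewrite // /det4 /=; ring.
- by apply: (@minor_in_point_ideal [:: 1; 2; 3; 5]%N (-1)); rewrite // /det4 /=; ring.
- by apply: (@minor_in_point_ideal [:: 2; 3; 4; 5]%N (-1)); rewrite // /det4 /=; ring.
- by apply: (@minor_in_point_ideal [:: 0; 1; 3; 5]%N 1); rewrite // /det4 /=; ring.
- by apply: (@minor_in_point_ideal [:: 0; 1; 4; 5]%N 1); rewrite // /det4 /=; ring.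
- by apply: (@minor_in_point_ideal [:: 1; 2; 4; 5]%N (-1)); rewrite // /det4 /=; ring.
- by apply: (@minor_in_point_ideal [:: 1; 3; 4; 5]%N (-1)); rewrite // /det4 /=; ring.
Qed.

Lemma gen_in_double_line :
  {in [:: x 0%N * f; x 1%N * f], forall g,
    in_ideal [:: x 0%N ^+ 2; x 0%N * x 1%N; x 1%N ^+ 2] g}.
Proof.
move=> g; rewrite !inE => /orP [] /eqP ->.
- by exists [:: x 0%N; - x 2%N; 0]; rewrite /= !big_ord_recl big_ord0 /=; ring.
- by exists [:: 0; x 0%N; - x 2%N]; rewrite /= !big_ord_recl big_ord0 /=; ring.
Qed.
End PointSchemeOfA.

Theorem proposition6 (K : closedFieldType) (hchar : (2 : K) != 0) :
  let x := @xv K in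
  let f := x 0%N ^+ 2 - x 1%N * x 2%N in
  same_subscheme (@point_scheme_gens K 6 4 A_rels) [:: x 0%N * f; x 1%N * f] /\
  subscheme_of [:: x 0%N ^+ 2; x 0%N * x 1%N; x 1%N ^+ 2]
               (@point_scheme_gens K 6 4 A_rels).
Proof.
move=> x f; split.
  by move=> p; split; apply: in_saturation_shift;
    [exact: mulX_point_gen_in_ideal | exact: mulX_gen_in_point_ideal].
move=> p sat_p; apply: in_saturation_trans (@gen_in_double_line K) _.
exact: in_saturation_shift (@mulX_point_gen_in_ideal K) sat_p.
Qed.
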